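(* Let $\nu>0$ be known, let $w_1,\ldots,w_n\in(0,1)$ be observations from the unit-log-Student-$t$ distribution, and let $$\ell(\sigma_\rho)=-n\log\sigma_\rho-\sum_{i=1}^n\log[w_i(1-w_i)]+\sum_{i=1}^n\log f_\nu\!\left(\frac{1}{\sigma_\rho}\log\frac{w_i}{1-w_i}\right),\qquad \sigma_\rho>0,$$ be the log-likelihood, where $f_\nu$ is the Student-$t$ PDF with $\nu$ degrees of freedom. Suppose $\widehat\sigma_\rho>0$ is an ML estimate in the loose sense, i.e. a solution of $\partial\ell/\partial\sigma_\rho=0$, equivalently $$\frac{\nu+1}{n}\sum_{i=1}^n\frac{\log^2\big(\frac{w_i}{1-w_i}\big)}{\nu\widehat\sigma_\rho^2+\log^2\big(\frac{w_i}{1-w_i}\big)}=1.$$ Then $\widehat\sigma_\rho$ is an ML estimate in the strict sense, i.e. $\ell$ attains its absolute maximum over $(0,\infty)$ at $\widehat\sigma_\rho$ (in particular $\partial^2\ell/\partial\sigma_\rho^2(\widehat\sigma_\rho)<0$).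
   Context: The unit-log-Student-$t$ distribution has PDF $f_W(w;\sigma_\rho)=\frac{1}{w(1-w)\sigma_\rho}f_\nu\big(\frac{1}{\sigma_\rho}\log\frac{w}{1-w}\big)$ on $(0,1)$, $\sigma_\rho>0$. *)

From Stdlib Require Import Reals Lra.
From Coquelicot Require Import Coquelicot.
Open Scope R_scope.

Fixpoint fsum (n : nat) (f : nat -> R) : R :=
  match n with
  | O => 0
  | S m => fsum m f + f m
  end.

Definition Gamma (a : R) : R :=
  RInt_gen (fun t => Rpower t (a - 1) * exp (- t)) (at_right 0) (Rbar_locally p_infty).

Definition student_t_pdf (nu x : R) : R :=
  Gamma ((nu + 1) / 2) / (sqrt (nu * PI) * Gamma (nu / 2))
  * Rpower (1 + x ^ 2 / nu) (- ((nu + 1) / 2)).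

Definition loglik (nu : R) (n : nat) (w : nat -> R) (s : R) : R :=
  - INR n * ln s
  - fsum n (fun i => ln (w i * (1 - w i)))
  + fsum n (fun i => ln (student_t_pdf nu (/ s * ln (w i / (1 - w i))))).

From Stdlib Require Import Reals Lra Lia.
From Coquelicot Require Import Coquelicot.
Open Scope R_scope.

(* As a function of [ln s], each summand [log f_nu (y / s)] of the
   log-likelihood is concave, because [u |-> ln (nu e^(2u) + y^2)] is convex.
   Hence the log-likelihood lies below its tangent in the variable [ln s], and
   a critical point is a global maximum.  At such a point
   [(nu + 1) sum_i y_i^2 / (nu s^2 + y_i^2) = n > 0], so some [y_i] is nonzero,
   and that summand makes the second derivative strictly negative. *)

Lemma fsum_ext n f g :
  (forall i, (i < n)%nat -> f i = g i) -> fsum n f = fsum n g.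
Proof.
  induction n as [|n IH]; simpl; intros H; [reflexivity|].
  rewrite IH by (intros; apply H; lia).
  rewrite (H n) by lia; reflexivity.
Qed.

Lemma fsum_plus n f g : fsum n (fun i => f i + g i) = fsum n f + fsum n g.
Proof. induction n as [|n IH]; simpl; [lra|]. rewrite IH; lra. Qed.

Lemma fsum_minus n f g : fsum n (fun i => f i - g i) = fsum n f - fsum n g.
Proof. induction n as [|n IH]; simpl; [lra|]. rewrite IH; lra. Qed.

Lemma fsum_scal n c f : fsum n (fun i => c * f i) = c * fsum n f.
Proof. induction n as [|n IH]; simpl; [lra|]. rewrite IH; lra. Qed.

Lemma fsum_const n c : fsum n (fun _ => c) = INR n * c.
Proof. induction n as [|n IH]; simpl fsum; [simpl; lra|]. rewrite IH, S_INR; lra. Qed.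

Lemma fsum_le n f g :
  (forall i, (i < n)%nat -> f i <= g i) -> fsum n f <= fsum n g.
Proof.
  induction n as [|n IH]; simpl; intros H; [lra|].
  assert (fsum n f <= fsum n g) by (apply IH; intros; apply H; lia).
  assert (f n <= g n) by (apply H; lia).
  lra.
Qed.

Lemma fsum_lt n f g :
  (forall i, (i < n)%nat -> f i <= g i) ->
  (exists i, (i < n)%nat /\ f i < g i) -> fsum n f < fsum n g.
Proof.
  induction n as [|n IH]; simpl; intros Hle [i [Hi Hlt]]; [lia|].
  assert (f n <= g n) by (apply Hle; lia).
  destruct (Nat.eq_dec i n) as [->|Hin].
  - assert (fsum n f <= fsum n g) by (apply fsum_le; intros; apply Hle; lia).
    lra.
  - assert (fsum n f < fsum n g).
    { apply IH; [intros; apply Hle; lia | exists i; split; [lia | exact Hlt]]. }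
    lra.
Qed.

Lemma fsum_pos_witness n f : 0 < fsum n f -> exists i, (i < n)%nat /\ 0 < f i.
Proof.
  induction n as [|n IH]; simpl; intros Hpos; [lra|].
  destruct (Rlt_dec 0 (f n)) as [Hn|Hn].
  - exists n; split; [lia | exact Hn].
  - destruct IH as [i [Hi Hf]]; [lra|].
    exists i; split; [lia | exact Hf].
Qed.

Lemma fsum_neg_of_weights n c p :
  (forall i, (i < n)%nat -> 0 < c i) ->
  (forall i, (i < n)%nat -> 0 <= p i) ->
  0 < fsum n p -> fsum n (fun i => - c i * p i) < 0.
Proof.
  intros Hc Hp Hsum.
  rewrite <- (Rmult_0_r (INR n)), <- fsum_const.
  destruct (fsum_pos_witness n p Hsum) as [i [Hi Hpi]].
  apply fsum_lt.
  - intros j Hj. specialize (Hc j Hj). specialize (Hp j Hj). nra.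
  - exists i. split; [exact Hi|]. specialize (Hc i Hi). nra.
Qed.

Lemma is_derive_fsum n (f : nat -> R -> R) df x :
  (forall i, (i < n)%nat -> is_derive (f i) x (df i)) ->
  is_derive (fun s => fsum n (fun i => f i s)) x (fsum n df).
Proof.
  induction n as [|n IH]; simpl; intros H.
  - apply (is_derive_const 0).
  - apply (is_derive_plus (fun s => fsum n (fun i => f i s)) (f n)).
    + apply IH; intros; apply H; lia.
    + apply H; lia.
Qed.

Lemma Derive_plus_const (f : R -> R) c x :
  Derive (fun s => f s + c) x = Derive f x.
Proof.
  unfold Derive. f_equal. apply Lim_ext. intros h. f_equal. ring.
Qed.

Lemma is_derive_div_id_at_root (g : R -> R) c x dg :
  x <> 0 -> is_derive g x dg -> g x = c ->
  is_derive (fun s => (g s - c) / s) x (dg / x).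
Proof.
  intros Hx Hg Hroot.
  assert (Hgc : is_derive (fun s => g s - c) x dg).
  { replace dg with (dg - 0) by ring.
    apply (is_derive_minus g (fun _ => c)); [exact Hg | apply (is_derive_const c)]. }
  replace (dg / x) with ((dg * x - (g x - c) * 1) / x ^ 2)
    by (rewrite Hroot; field; exact Hx).
  apply (is_derive_div (fun s => g s - c) (fun s => s));
    [exact Hgc | exact (@is_derive_id R_AbsRing x) | exact Hx].
Qed.

Lemma ln_le_sub_1 x : 0 < x -> ln x <= x - 1.
Proof. intros Hx. pose proof (exp_ineq1_le (ln x)) as H. rewrite exp_ln in H; lra. Qed.

Lemma ln_concave p x y : 0 <= p <= 1 -> 0 < x -> 0 < y ->
  p * ln x + (1 - p) * ln y <= ln (p * x + (1 - p) * y).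
Proof.
  intros Hp Hx Hy.
  set (m := p * x + (1 - p) * y).
  assert (Hm : 0 < m) by (unfold m; nra).
  pose proof (ln_le_sub_1 (x / m) (Rdiv_lt_0_compat _ _ Hx Hm)) as Hxm.
  pose proof (ln_le_sub_1 (y / m) (Rdiv_lt_0_compat _ _ Hy Hm)) as Hym.
  rewrite ln_div in Hxm, Hym by lra.
  assert (p * (x / m - 1) + (1 - p) * (y / m - 1) = 0) by (unfold m in *; field; nra).
  nra.
Qed.

Lemma ln_affine_ge a b r : 0 < a -> 0 <= b -> 0 < r ->
  ln (a + b) + a / (a + b) * ln r <= ln (a * r + b).
Proof.
  intros Ha Hb Hr.
  set (p := a / (a + b)).
  assert (Hp : 0 <= p <= 1).
  { assert (p = 1 - b / (a + b)) by (unfold p; field; lra).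
    assert (0 <= p) by (apply Rdiv_le_0_compat; lra).
    assert (0 <= b / (a + b)) by (apply Rdiv_le_0_compat; lra).
    lra. }
  pose proof (ln_concave p r 1 Hp Hr Rlt_0_1) as Hconc.
  rewrite ln_1, Rmult_0_r, Rplus_0_r in Hconc.
  replace (p * r + (1 - p) * 1) with ((a * r + b) / (a + b)) in Hconc
    by (unfold p; field; lra).
  rewrite ln_div in Hconc by nra.
  lra.
Qed.

Definition student_t_const (nu : R) : R :=
  Gamma ((nu + 1) / 2) / (sqrt (nu * PI) * Gamma (nu / 2)).

Definition log_kernel (nu x : R) : R := - ((nu + 1) / 2) * ln (1 + x ^ 2 / nu).

Definition weight (nu y s : R) : R := y ^ 2 / (nu * s ^ 2 + y ^ 2).

Definition logit (x : R) : R := ln (x / (1 - x)).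

Lemma ln_student_t_pdf nu x : 0 < student_t_const nu ->
  ln (student_t_pdf nu x) = ln (student_t_const nu) + log_kernel nu x.
Proof.
  intros HC. unfold student_t_pdf, log_kernel. fold (student_t_const nu).
  rewrite ln_mult, ln_Rpower; [reflexivity | exact HC | apply exp_pos].
Qed.

Lemma scaled_sq_pos nu s : 0 < nu -> 0 < s -> 0 < nu * s ^ 2.
Proof. intros Hnu Hs. apply Rmult_lt_0_compat; [lra | apply pow_lt; lra]. Qed.

Lemma weight_denom_pos nu y s : 0 < nu -> 0 < s -> 0 < nu * s ^ 2 + y ^ 2.
Proof.
  intros Hnu Hs. pose proof (scaled_sq_pos nu s Hnu Hs). pose proof (pow2_ge_0 y). lra.
Qed.

Lemma weight_ge0 nu y s : 0 < nu -> 0 < s -> 0 <= weight nu y s.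
Proof.
  intros Hnu Hs. unfold weight.
  apply Rdiv_le_0_compat; [apply pow2_ge_0 | apply weight_denom_pos; assumption].
Qed.

Lemma log_kernel_scaled nu y s : 0 < nu -> 0 < s ->
  log_kernel nu (/ s * y) = - ((nu + 1) / 2) * (ln (nu * s ^ 2 + y ^ 2) - ln nu - 2 * ln s).
Proof.
  intros Hnu Hs. unfold log_kernel. f_equal.
  assert (Hy : 0 <= y ^ 2) by apply pow2_ge_0.
  pose proof (scaled_sq_pos nu s Hnu Hs) as Hns.
  replace (1 + (/ s * y) ^ 2 / nu) with ((nu * s ^ 2 + y ^ 2) / (nu * s ^ 2))
    by (field; lra).
  rewrite ln_div, ln_mult, ln_pow by (try apply pow_lt; lra).
  simpl (INR 2). lra.
Qed.

Lemma log_kernel_tangent_le nu y s h : 0 < nu -> 0 < s -> 0 < h ->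
  log_kernel nu (/ s * y) - log_kernel nu (/ h * y)
  <= (nu + 1) * weight nu y h * (ln s - ln h).
Proof.
  intros Hnu Hs Hh.
  rewrite !log_kernel_scaled by assumption.
  assert (Hy : 0 <= y ^ 2) by apply pow2_ge_0.
  pose proof (scaled_sq_pos nu h Hnu Hh) as Hnh.
  pose proof (ln_affine_ge (nu * h ^ 2) (y ^ 2) (s ^ 2 / h ^ 2) Hnh Hy) as Hconv.
  replace (nu * h ^ 2 * (s ^ 2 / h ^ 2) + y ^ 2) with (nu * s ^ 2 + y ^ 2) in Hconv
    by (field; lra).
  rewrite ln_div, !ln_pow in Hconv by nra.
  specialize (Hconv ltac:(apply Rdiv_lt_0_compat; nra)).
  assert (Hw : weight nu y h = 1 - nu * h ^ 2 / (nu * h ^ 2 + y ^ 2))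
    by (unfold weight; field; lra).
  rewrite Hw. simpl (INR 2) in Hconv.
  set (q := nu * h ^ 2 / (nu * h ^ 2 + y ^ 2)) in *.
  set (As := ln (nu * s ^ 2 + y ^ 2)) in *.
  set (Ah := ln (nu * h ^ 2 + y ^ 2)) in *.
  assert ((nu + 1) / 2 * (Ah + q * (2 * ln s - 2 * ln h)) <= (nu + 1) / 2 * As)
    by (apply Rmult_le_compat_l; lra).
  nra.
Qed.

Lemma is_derive_log_kernel_scaled nu y s : 0 < nu -> 0 < s ->
  is_derive (fun t => log_kernel nu (/ t * y)) s ((nu + 1) / s * weight nu y s).
Proof.
  intros Hnu Hs. unfold log_kernel, weight.
  assert (Hy : 0 <= y ^ 2) by apply pow2_ge_0.
  pose proof (scaled_sq_pos nu s Hnu Hs) as Hns.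
  auto_derive.
  - repeat split; try lra.
    assert (0 <= (/ s * y) ^ 2 / nu) by (apply Rdiv_le_0_compat; [apply pow2_ge_0 | lra]).
    simpl in *; lra.
  - field. repeat split; lra.
Qed.

Lemma is_derive_weight nu y s : 0 < nu -> 0 < s ->
  is_derive (weight nu y) s (- (2 * nu * s / (nu * s ^ 2 + y ^ 2)) * weight nu y s).
Proof.
  intros Hnu Hs. unfold weight.
  assert (Hy : 0 <= y ^ 2) by apply pow2_ge_0.
  pose proof (scaled_sq_pos nu s Hnu Hs) as Hns.
  auto_derive; [lra | field; lra].
Qed.

Definition scale_loglik (nu : R) (n : nat) (y : nat -> R) (s : R) : R :=
  - INR n * ln s + fsum n (fun i => log_kernel nu (/ s * y i)).

Definition scale_score (nu : R) (n : nat) (y : nat -> R) (s : R) : R :=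
  ((nu + 1) * fsum n (fun i => weight nu (y i) s) - INR n) / s.

Section ScaleLoglik.

Variables (nu : R) (n : nat) (y : nat -> R).
Hypothesis nu_gt0 : 0 < nu.

Lemma is_derive_scale_loglik s : 0 < s ->
  is_derive (scale_loglik nu n y) s (scale_score nu n y s).
Proof.
  intros Hs.
  assert (Hln : is_derive (fun t => - INR n * ln t) s (- INR n * / s))
    by (apply is_derive_scal, is_derive_Reals, derivable_pt_lim_ln, Hs).
  assert (Hsum := is_derive_fsum n (fun i t => log_kernel nu (/ t * y i)) _ s
                    (fun i _ => is_derive_log_kernel_scaled nu (y i) s nu_gt0 Hs)).
  pose proof (is_derive_plus _ _ _ _ _ Hln Hsum) as H.
  rewrite fsum_scal in H.
  unfold scale_score. replace (((nu + 1) * fsum n (fun i => weight nu (y i) s) - INR n) / s)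
    with (plus (- INR n * / s) ((nu + 1) / s * fsum n (fun i => weight nu (y i) s)))
    by (unfold plus; simpl; field; lra).
  exact H.
Qed.

Lemma scale_loglik_tangent_le s h : 0 < s -> 0 < h ->
  scale_loglik nu n y s <= scale_loglik nu n y h + h * scale_score nu n y h * (ln s - ln h).
Proof.
  intros Hs Hh.
  assert (Hterms :
    fsum n (fun i => log_kernel nu (/ s * y i) - log_kernel nu (/ h * y i))
    <= fsum n (fun i => (nu + 1) * (ln s - ln h) * weight nu (y i) h)).
  { apply fsum_le. intros i _.
    pose proof (log_kernel_tangent_le nu (y i) s h nu_gt0 Hs Hh). lra. }
  rewrite fsum_minus, fsum_scal in Hterms.
  unfold scale_loglik, scale_score.
  replace (h * (((nu + 1) * fsum n (fun i => weight nu (y i) h) - INR n) / h))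
    with ((nu + 1) * fsum n (fun i => weight nu (y i) h) - INR n) by (field; lra).
  nra.
Qed.

Lemma Derive2_scale_loglik_neg h : (0 < n)%nat -> 0 < h -> scale_score nu n y h = 0 ->
  Derive (Derive (scale_loglik nu n y)) h < 0.
Proof.
  intros Hn Hh Hcrit.
  set (G := fun s => (nu + 1) * fsum n (fun i => weight nu (y i) s)).
  set (c := fun i => 2 * nu * h / (nu * h ^ 2 + y i ^ 2)).
  assert (HG : is_derive G h ((nu + 1) * fsum n (fun i => - c i * weight nu (y i) h))).
  { apply is_derive_scal.
    apply (is_derive_fsum n (fun i => weight nu (y i))).
    intros i _. apply is_derive_weight; assumption. }
  assert (HGh : G h = INR n).
  { unfold scale_score in Hcrit. apply Rmult_integral in Hcrit as [H | H].
    - fold (G h) in H. lra.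
    - pose proof (Rinv_neq_0_compat h ltac:(lra)). contradiction. }
  assert (Hweights : 0 < fsum n (fun i => weight nu (y i) h)).
  { apply lt_0_INR in Hn. unfold G in HGh. nra. }
  assert (Hslope : fsum n (fun i => - c i * weight nu (y i) h) < 0).
  { apply fsum_neg_of_weights; [| intros i _; apply weight_ge0; lra | exact Hweights].
    intros i _. unfold c.
    apply Rdiv_lt_0_compat; [nra | apply weight_denom_pos; lra]. }
  assert (Hscore : is_derive (scale_score nu n y) h
                     ((nu + 1) * fsum n (fun i => - c i * weight nu (y i) h) / h))
    by (apply (is_derive_div_id_at_root G); [lra | exact HG | exact HGh]).
  rewrite (Derive_ext_loc _ (scale_score nu n y)).
  - rewrite (is_derive_unique _ _ _ Hscore).
    apply Rdiv_neg_pos; nra.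
  - exists (mkposreal h Hh). intros t Ht.
    apply is_derive_unique, is_derive_scale_loglik.
    apply Rabs_lt_between in Ht. unfold minus, plus, opp in Ht; simpl in Ht. lra.
Qed.

End ScaleLoglik.

Lemma loglik_shift nu n w : 0 < student_t_const nu -> forall s,
  loglik nu n w s =
  scale_loglik nu n (fun i => logit (w i)) s
  + (INR n * ln (student_t_const nu) - fsum n (fun i => ln (w i * (1 - w i)))).
Proof.
  intros HC s. unfold loglik, scale_loglik.
  rewrite (fsum_ext n (fun i => ln (student_t_pdf nu (/ s * ln (w i / (1 - w i)))))
                      (fun i => ln (student_t_const nu) + log_kernel nu (/ s * logit (w i))))
    by (intros; apply ln_student_t_pdf, HC).
  rewrite fsum_plus, fsum_const. ring.
Qed.

Lemma ln_nonpos x : x <= 0 -> ln x = 0.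
Proof. intros Hx. unfold ln. destruct (Rlt_dec 0 x); [exfalso; lra | reflexivity]. Qed.

(* Positivity of the improper integral [Gamma] is not at hand.  Instead: were
   the normalising constant [<= 0], every [ln (student_t_pdf nu x)] would be
   the junk value [0] and the likelihood would have no critical point. *)
Lemma student_t_const_pos nu n w shat : (0 < n)%nat -> 0 < shat ->
  is_derive (loglik nu n w) shat 0 -> 0 < student_t_const nu.
Proof.
  intros Hn Hh Hd.
  destruct (Rlt_le_dec 0 (student_t_const nu)) as [HC | HC]; [exact HC | exfalso].
  set (K := fsum n (fun i => ln (w i * (1 - w i)))).
  assert (Hflat : forall s, loglik nu n w s = - INR n * ln s - K).
  { intros s. unfold loglik. fold K.
    rewrite (fsum_ext n _ (fun _ => 0)), fsum_const; [ring|].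
    intros i _. apply ln_nonpos.
    unfold student_t_pdf. fold (student_t_const nu).
    pose proof (exp_pos (- ((nu + 1) / 2) * ln (1 + (/ s * ln (w i / (1 - w i))) ^ 2 / nu))).
    unfold Rpower. nra. }
  assert (Hd' : is_derive (loglik nu n w) shat (- INR n / shat)).
  { apply (is_derive_ext (fun s => - INR n * ln s - K)); [intros; symmetry; apply Hflat|].
    auto_derive; [lra | field; lra]. }
  pose proof (is_derive_unique _ _ _ Hd) as H0.
  rewrite (is_derive_unique _ _ _ Hd') in H0.
  apply lt_0_INR in Hn.
  assert (0 < INR n / shat) by (apply Rdiv_lt_0_compat; lra).
  lra.
Qed.

Theorem proposition5 (nu : R) (n : nat) (w : nat -> R) (shat : R) :
  0 < nu ->
  (0 < n)%nat ->
  (forall i, (i < n)%nat -> 0 < w i < 1) ->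
  0 < shat ->
  is_derive (loglik nu n w) shat 0 ->
  (forall s, 0 < s -> loglik nu n w s <= loglik nu n w shat) /\
  Derive (Derive (loglik nu n w)) shat < 0.
Proof.
  (* The observations enter only through the constants [logit (w i)]; their
     range is irrelevant. *)
  intros Hnu Hn _ Hh Hd.
  pose proof (student_t_const_pos nu n w shat Hn Hh Hd) as HC.
  set (y := fun i => logit (w i)).
  assert (HDerive : forall t, Derive (loglik nu n w) t = Derive (scale_loglik nu n y) t).
  { intros t. rewrite (Derive_ext _ _ _ (loglik_shift nu n w HC)).
    apply Derive_plus_const. }
  assert (Hcrit : scale_score nu n y shat = 0).
  { rewrite <- (is_derive_unique _ _ _ (is_derive_scale_loglik nu n y Hnu shat Hh)).
    rewrite <- HDerive. exact (is_derive_unique _ _ _ Hd). }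
  split.
  - intros s Hs. rewrite !(loglik_shift nu n w HC).
    pose proof (scale_loglik_tangent_le nu n y Hnu s shat Hs Hh) as Htan.
    rewrite Hcrit in Htan. fold y. lra.
  - rewrite (Derive_ext _ _ _ HDerive).
    exact (Derive2_scale_loglik_neg nu n y Hnu shat Hn Hh Hcrit).
Qed.
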